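(* In the setting of the context, let $p>L$ and $\alpha>0$, and set $\sigma_2=\frac{2(p+L)}{p-L}$. For every $y\in Y$ and $z\in\mathbb{R}^n$, $$\alpha(p-L)\|x^*(z)-x(y_+(z),z)\|^2\le(1+\alpha L+\alpha L\sigma_2)\|y-y_+(z)\|\cdot\mathrm{dist}(y_+(z),Y(z))\le(1+\alpha L+\alpha L\sigma_2)\|y-y_+(z)\|\cdot D(Y),$$ where $D(Y)$ is the diameter of $Y$.
   Context: $X\subseteq\mathbb{R}^n$ nonempty closed convex, $Y\subseteq\mathbb{R}^m$ nonempty closed convex compact, $f$ continuously differentiable with $f(x,\cdot)$ concave for each $x$, $\nabla_xf$ and $\nabla_yf$ $L$-Lipschitz, $\max_{y\in Y}f(x,y)$ bounded below. $P_Y$ is Euclidean projection and $\mathrm{dist}$ Euclidean distance to a set. $K(x,z;y)=f(x,y)+\frac p2\|x-z\|^2$; $x(y,z)=\arg\min_{x\in X}K(x,z;y)$; $d(y,z)=\min_{x\in X}K(x,z;y)$; $Y(z)=\arg\max_{y\in Y}d(y,z)$; $x^*(z)=\arg\min_{x\in X}\max_{y\in Y}K(x,z;y)$; $y_+(z)=P_Y\big(y+\alpha\nabla_yK(x(y,z),z;y)\big)$ (depending on $y$). *)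

From HB Require Import structures.
From mathcomp Require Import all_boot all_order all_algebra.
From mathcomp Require Import all_classical all_reals topology normedtype.
Set Implicit Arguments. Unset Strict Implicit. Unset Printing Implicit Defensive.
Import Order.TTheory GRing.Theory Num.Theory.
Import numFieldTopology.Exports numFieldNormedType.Exports.
Local Open Scope classical_set_scope.
Local Open Scope ring_scope.

Section Defs.
Variable R : realType.

Definition dotv k (u v : 'rV[R]_k) : R := \sum_(i < k) u ord0 i * v ord0 i.
Definition enorm k (u : 'rV[R]_k) : R := Num.sqrt (dotv u u).

Definition set_dist k (v : 'rV[R]_k) (S : set 'rV[R]_k) : R :=
  inf [set enorm (v - w) | w in S].

Definition set_diam k (S : set 'rV[R]_k) : R :=
  sup [set r : R | exists a b, [/\ S a, S b & r = enorm (a - b)]].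

Definition convex_set k (S : set 'rV[R]_k) : Prop :=
  forall a b, S a -> S b -> forall t : R, 0 <= t <= 1 ->
    S (t *: a + (1 - t) *: b).

Definition concave_on k (S : set 'rV[R]_k) (h : 'rV[R]_k -> R) : Prop :=
  forall a b, S a -> S b -> forall t : R, 0 <= t <= 1 ->
    t * h a + (1 - t) * h b <= h (t *: a + (1 - t) *: b).

Definition is_grad k (h : 'rV[R]_k -> R) (x g : 'rV[R]_k) : Prop :=
  forall e : R, 0 < e -> exists2 del : R, 0 < del &
    forall d, enorm d < del -> `|h (x + d) - h x - dotv g d| <= e * enorm d.

(* Euclidean projection onto S (characterization; unique for S closed convex nonempty) *)
Definition is_proj k (S : set 'rV[R]_k) (P : 'rV[R]_k -> 'rV[R]_k) : Prop :=
  forall v, S (P v) /\ forall w, S w -> enorm (v - P v) <= enorm (v - w).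

End Defs.

(* For fixed z, K(., z; y) is (p - L)-strongly convex, so its minimiser x(y, z)
   grows quadratically and is L/(p - L)-Lipschitz in y.  Hence the concave dual
   function d(., z) has the Lipschitz supergradient grad_y f(x(y, z), y) (Danskin),
   it attains its maximum on the compact set Y at some ys, and since
   (x(ys, z), ys) is a saddle point, x^*(z) = x(ys, z).  Adding the two
   quadratic-growth inequalities at ys and y+ and using concavity in y gives
   (p - L) |x^*(z) - x(y+, z)|^2 <= <grad d(y+), ys - y+>; the variational
   inequality of the projection defining y+ and the Lipschitz bound on grad d
   turn alpha times the right-hand side into
   (1 + alpha L + alpha L sigma2) |y - y+| |y+ - ys|.  Taking the infimum over
   ys in Y(z) gives the distance, which is at most the diameter of Y. *)

From HB Require Import structures.
From mathcomp Require Import all_boot all_order all_algebra.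
From mathcomp Require Import all_classical all_reals topology normedtype.
From mathcomp Require Import derive.
From mathcomp Require Import ring lra.
Import Order.TTheory GRing.Theory Num.Theory.
Import numFieldTopology.Exports numFieldNormedType.Exports.
Local Open Scope classical_set_scope.
Local Open Scope ring_scope.

Set Implicit Arguments. Unset Strict Implicit.

Section Euclid.
Variables (R : realType) (k : nat).
Implicit Types u v w : 'rV[R]_k.

Lemma dotvC u v : dotv u v = dotv v u.
Proof. by apply: eq_bigr => i _; rewrite mulrC. Qed.

Lemma dotvDl u v w : dotv (u + v) w = dotv u w + dotv v w.
Proof. by rewrite /dotv -big_split; apply: eq_bigr => i _; rewrite mxE mulrDl. Qed.

Lemma dotvDr u v w : dotv w (u + v) = dotv w u + dotv w v.
Proof. by rewrite dotvC dotvDl !(dotvC w). Qed.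

Lemma dotvZl (c : R) u v : dotv (c *: u) v = c * dotv u v.
Proof. by rewrite /dotv mulr_sumr; apply: eq_bigr => i _; rewrite mxE mulrA. Qed.

Lemma dotvZr (c : R) u v : dotv u (c *: v) = c * dotv u v.
Proof. by rewrite dotvC dotvZl dotvC. Qed.

Lemma dotvNl u v : dotv (- u) v = - dotv u v.
Proof. by rewrite -scaleN1r dotvZl mulN1r. Qed.

Lemma dotvNr u v : dotv u (- v) = - dotv u v.
Proof. by rewrite dotvC dotvNl dotvC. Qed.

Lemma dotvBl u v w : dotv (u - v) w = dotv u w - dotv v w.
Proof. by rewrite dotvDl dotvNl. Qed.

Lemma dotv0l v : dotv 0 v = 0.
Proof. by rewrite /dotv big1 // => i _; rewrite mxE mul0r. Qed.

Lemma dotvv_ge0 u : 0 <= dotv u u.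
Proof. by apply: sumr_ge0 => i _; rewrite -expr2 sqr_ge0. Qed.

Lemma dotvv_eq0 u : dotv u u = 0 -> u = 0.
Proof.
move=> /eqP; rewrite /dotv psumr_eq0 => [/allP u0|i _]; last first.
  by rewrite -expr2 sqr_ge0.
apply/rowP => i; rewrite mxE.
by have := u0 i (mem_index_enum _); rewrite /= mulf_eq0 orbb => /eqP.
Qed.

Lemma enorm_ge0 u : 0 <= enorm u.
Proof. exact: sqrtr_ge0. Qed.

Lemma enorm_sqr u : enorm u ^+ 2 = dotv u u.
Proof. by rewrite /enorm sqr_sqrtr // dotvv_ge0. Qed.

Lemma enorm_eq0 u : enorm u = 0 -> u = 0.
Proof. by move=> u0; apply: dotvv_eq0; rewrite -enorm_sqr u0 expr0n. Qed.

Lemma enorm0 : enorm (0 : 'rV[R]_k) = 0.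
Proof. by rewrite /enorm dotv0l sqrtr0. Qed.

Lemma enormZ (c : R) u : enorm (c *: u) = `|c| * enorm u.
Proof.
by rewrite /enorm dotvZl dotvZr mulrA -expr2 sqrtrM ?sqr_ge0 // sqrtr_sqr.
Qed.

Lemma enormN u : enorm (- u) = enorm u.
Proof. by rewrite -scaleN1r enormZ normrN normr1 mul1r. Qed.

Lemma enormBC u v : enorm (u - v) = enorm (v - u).
Proof. by rewrite -enormN opprB. Qed.

Lemma enormD_sqr u v :
  enorm (u + v) ^+ 2 = enorm u ^+ 2 + 2 * dotv u v + enorm v ^+ 2.
Proof. by rewrite !enorm_sqr dotvDl !dotvDr (dotvC v u); ring. Qed.

Lemma enormB_sqr u v :
  enorm (u - v) ^+ 2 = enorm u ^+ 2 - 2 * dotv u v + enorm v ^+ 2.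
Proof. by rewrite enormD_sqr dotvNr enormN; ring. Qed.

(* Expand [0 <= |(|v|) u - (|u|) v|^2]. *)
Lemma dotv_le u v : dotv u v <= enorm u * enorm v.
Proof.
have [u0|u0] := eqVneq (enorm u) 0; first by rewrite (enorm_eq0 u0) dotv0l enorm0 mul0r.
have [v0|v0] := eqVneq (enorm v) 0.
  by rewrite (enorm_eq0 v0) dotvC dotv0l enorm0 mulr0.
have uv_gt0 : 0 < enorm u * enorm v by rewrite mulr_gt0 // lt_def ?u0 ?v0 enorm_ge0.
have := sqr_ge0 (enorm (enorm v *: u - enorm u *: v)).
rewrite enormB_sqr dotvZl dotvZr !enormZ.
rewrite !ger0_norm ?enorm_ge0 // => H.
rewrite -(ler_pM2r uv_gt0) -subr_ge0; nra.
Qed.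

Lemma dotv_ge u v : - (enorm u * enorm v) <= dotv u v.
Proof. by rewrite lerNl -dotvNl -(enormN u) dotv_le. Qed.

Lemma ler_enormD u v : enorm (u + v) <= enorm u + enorm v.
Proof.
rewrite -(ler_pXn2r (_ : 0 < 2)%N) ?nnegrE ?addr_ge0 ?enorm_ge0 //.
rewrite enormD_sqr; have := dotv_le u v; lra.
Qed.

Lemma enorm_convex_sqr (t : R) u v :
  enorm (t *: u + (1 - t) *: v) ^+ 2
  = t * enorm u ^+ 2 + (1 - t) * enorm v ^+ 2 - t * (1 - t) * enorm (u - v) ^+ 2.
Proof.
rewrite !enorm_sqr /dotv !mulr_sumr -big_split -sumrB /=.
by apply: eq_bigr => i _; rewrite !mxE; ring.
Qed.

Lemma enorm_le_mx_norm u : enorm u <= k.+1%:R * `|u|.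
Proof.
have coord_le i : `|u ord0 i| <= `|u|.
  rewrite [leRHS]/Num.norm /= mx_normrE; apply/bigmax_geP; right.
  by exists (ord0, i).
rewrite -(ler_pXn2r (_ : 0 < 2)%N) ?nnegrE ?enorm_ge0 ?mulr_ge0 ?ler0n //.
rewrite enorm_sqr; apply: (@le_trans _ _ (\sum_(i < k) `|u| ^+ 2)).
  apply: ler_sum => i _; rewrite -expr2 -(real_normK (num_real _)).
  by rewrite lerXn2r ?nnegrE ?normr_ge0.
rewrite sumr_const card_ord exprMn -[_ *+ k]mulr_natl ler_wpM2r ?sqr_ge0 //.
rewrite -natrX ler_nat (leq_trans (leqnSn _)) //.
by rewrite expnS leq_pmulr // expn_gt0.
Qed.

Lemma near_enorm_lt v0 (e : R) : 0 < e -> \forall v \near v0, enorm (v - v0) < e.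
Proof.
move=> e_gt0; have ek_gt0 : 0 < e / k.+1%:R by rewrite divr_gt0.
have [+ _] := @cvgrPdist_lt _ _ _ (nbhs v0) _ id v0.
move=> /(_ cvg_id _ ek_gt0); apply: filterS => v vv0.
apply: le_lt_trans (enorm_le_mx_norm _) _.
by rewrite -ltr_pdivlMl // mulrC -normrN opprB.
Qed.

Lemma enorm_continuous : continuous (@enorm R k).
Proof.
move=> v0; apply/(@cvgrPdist_le _ _ _ (nbhs v0)) => e e_gt0.
near=> v.
have vv0 : enorm (v - v0) < e by near: v; exact: near_enorm_lt.
have le1 : enorm v <= enorm v0 + enorm (v - v0).
  by have := ler_enormD v0 (v - v0); rewrite addrC subrK.
have le2 : enorm v0 <= enorm v + enorm (v - v0).
  by have := ler_enormD v (v0 - v); rewrite addrC subrK enormBC.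
rewrite ler_norml; apply/andP; split; lra.
Unshelve. all: end_near.
Qed.

End Euclid.

Lemma neg_lipschitz_eq (R : realType) k j (g : 'rV[R]_k -> 'rV[R]_j) (L : R) :
  L < 0 -> (forall a b, enorm (g a - g b) <= L * enorm (a - b)) ->
  forall a b : 'rV[R]_k, a = b.
Proof.
move=> L_lt0 lip a b; apply: subr0_eq; apply: enorm_eq0; apply/eqP.
rewrite eq_le enorm_ge0 andbT.
by have := lip a b; have := enorm_ge0 (g a - g b); have := enorm_ge0 (a - b); nra.
Qed.

Lemma le0_of_forall_le_mul (R : realType) (a c : R) :
  (forall t, 0 < t -> t < 1 -> a <= t * c) -> a <= 0.
Proof.
move=> H; rewrite leNgt; apply/negP => a_gt0.
have d_gt0 : 0 < a + `|c| + 1 by have := normr_ge0 c; lra.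
set t := a / (a + `|c| + 1).
have td : t * (a + `|c| + 1) = a by rewrite divfK // gt_eqF.
have t_gt0 : 0 < t by rewrite divr_gt0.
have t_lt1 : t < 1 by rewrite ltr_pdivrMr // mul1r; have := normr_ge0 c; lra.
have := H t t_gt0 t_lt1; have := ler_norm c; nra.
Qed.

Section Sets.
Variables (R : realType) (k : nat).
Implicit Types (S : set 'rV[R]_k) (u v w : 'rV[R]_k).

Lemma proj_dotv_le0 S P v w : convex_set S -> is_proj S P -> S w ->
  dotv (v - P v) (w - P v) <= 0.
Proof.
move=> convS projP Sw; set a := v - P v; set b := w - P v.
apply: (@le0_of_forall_le_mul _ _ (enorm b ^+ 2 / 2)) => t t_gt0 t_lt1.
have St : S (t *: w + (1 - t) *: P v).
  by apply: convS => //; [exact: (projP v).1 | rewrite !ltW].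
have := (projP v).2 _ St.
have -> : v - (t *: w + (1 - t) *: P v) = a - t *: b.
  by apply/rowP => i; rewrite !mxE; ring.
rewrite -/a -(ler_pXn2r (_ : 0 < 2)%N) ?nnegrE ?enorm_ge0 //.
rewrite (enormB_sqr a) dotvZr enormZ (gtr0_norm t_gt0) => H; rewrite -(ler_pM2l t_gt0); nra.
Qed.

Lemma set_dist_le v S w : S w -> set_dist v S <= enorm (v - w).
Proof.
move=> Sw; apply: ge_inf; last by exists w.
by exists 0 => _ [w' _ <-]; exact: enorm_ge0.
Qed.

Lemma ler_set_dist v S (a c : R) : S !=set0 -> 0 <= c ->
  (forall w, S w -> a <= c * enorm (v - w)) -> a <= c * set_dist v S.
Proof.
move=> [w0 Sw0]; rewrite le_eqVlt => /predU1P[<- /(_ w0 Sw0)|c_gt0 H].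
  by rewrite !mul0r.
rewrite -ler_pdivrMl //; apply: lb_le_inf; first by exists (enorm (v - w0)), w0.
by move=> _ [w Sw <-]; rewrite ler_pdivrMl //; exact: H.
Qed.

Lemma set_diam_ge S u v : compact S -> S u -> S v -> enorm (u - v) <= set_diam S.
Proof.
move=> cS Su Sv; apply: sup_upper_bound; last by exists u, v.
split; first by exists (enorm (u - v)), u, v.
have [c Sc cmax] := EVT_max_rV (ex_intro _ u Su) cS
  (continuous_subspaceT (@enorm_continuous R k)).
exists (enorm c + enorm c) => _ [a [b [Sa Sb ->]]].
apply: le_trans (ler_enormD _ _) _; rewrite enormN.
by apply: lerD; apply: cmax; rewrite inE.
Qed.

End Sets.

Section Gradient.
Variables (R : realType) (k : nat).
Implicit Types (h : 'rV[R]_k -> R) (a v x G : 'rV[R]_k).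

Lemma is_derive_segment h a v t G :
  is_grad h (a + t *: v) G -> is_derive t 1 (fun s => h (a + s *: v)) (dotv G v).
Proof.
move=> hG; set u := fun s => h (a + s *: v).
have v1_gt0 : 0 < enorm v + 1 by have := enorm_ge0 v; lra.
have cv : (fun s : R => s^-1 *: ((u \o shift t) (s *: 1) - u t)) @ 0^' --> dotv G v.
  apply/cvgrPdist_le => e e_gt0.
  have [del del_gt0 Hdel] := hG (e / (enorm v + 1)) (divr_gt0 e_gt0 v1_gt0).
  near=> s.
  have s_neq0 : s != 0 by near: s; exact: nbhs_dnbhs_neq.
  have s_lt : `|s| < del / (enorm v + 1).
    by near: s; apply: dnbhs0_lt; rewrite divr_gt0.
  have sv_lt : enorm (s *: v) < del.
    rewrite enormZ; move: s_lt; rewrite ltr_pdivlMr //.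
    by have := enorm_ge0 v; have := normr_ge0 s; nra.
  have le_e := Hdel _ sv_lt.
  rewrite enormZ dotvZr -(addrA a) -scalerDl -/(u (t + s)) -/(u t) in le_e.
  rewrite /= /shift /= [s%:A]mulr1 (addrC s t).
  change (`|dotv G v - s^-1 * (u (t + s) - u t)| <= (e : R)).
  have -> : dotv G v - s^-1 * (u (t + s) - u t) =
            - (s^-1 * (u (t + s) - u t - s * dotv G v)) by field.
  rewrite normrN normrM normfV mulrC ler_pdivrMr ?normr_gt0 //.
  apply: le_trans le_e _.
  have : e / (enorm v + 1) * (enorm v + 1) = e by rewrite divfK // lt0r_neq0.
  set e' := e / _ => e'E.
  have e's_ge0 : 0 <= e' * `|s| by rewrite mulr_ge0 // divr_ge0 // ltW.
  rewrite -e'E; nra.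
split; first by apply/cvg_ex; exists (dotv G v).
exact: cvg_lim cv.
Unshelve. all: end_near.
Qed.

Lemma concave_grad_ge h x y G :
  concave_on setT h -> is_grad h x G -> h y <= h x + dotv G (y - x).
Proof.
move=> hconc hG; set v := y - x.
suff : h y - h x - dotv G v <= 0 by lra.
apply: (@le0_of_forall_le_mul _ _ (enorm v)) => e e_gt0 _.
have [del del_gt0 Hdel] := hG e e_gt0.
have v1_gt0 : 0 < enorm v + 1 by have := enorm_ge0 v; lra.
set s := Num.min 1 (del / (enorm v + 1)).
have s_gt0 : 0 < s by rewrite lt_min ltr01 divr_gt0.
have s_le1 : s <= 1 by rewrite ge_min lexx.
have sv_lt : enorm (s *: v) < del.
  have : s * (enorm v + 1) <= del by rewrite -ler_pdivlMr // ge_min lexx orbT.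
  by rewrite enormZ (gtr0_norm s_gt0); nra.
have := Hdel _ sv_lt; rewrite enormZ dotvZr (gtr0_norm s_gt0) ler_norml => /andP[_ up].
have := hconc y x I I s; rewrite (ltW s_gt0) s_le1 => /(_ isT).
have -> : s *: y + (1 - s) *: x = x + s *: v by apply/rowP => i; rewrite !mxE; ring.
move=> conc; rewrite -(ler_pM2l s_gt0); lra.
Qed.

(* Mean value theorem for [t |-> h (a + t v) - b t - c t^2 / 2] on [0, 1]. *)
Lemma grad_segment_lb h (Gh : 'rV[R]_k -> 'rV[R]_k) a v (b c : R) :
  (forall x, is_grad h x (Gh x)) ->
  (forall t, 0 <= t <= 1 -> b + c * t <= dotv (Gh (a + t *: v)) v) ->
  h a + b + c / 2 <= h (a + v).
Proof.
move=> hG hb.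
pose u := (fun s => h (a + s *: v)) - (b *: id + (c / 2) *: id ^+ 2).
have du (t : R) : is_derive t 1 u (dotv (Gh (a + t *: v)) v - (b + c * t)).
  apply: is_derive_eq; first exact: is_deriveB (is_derive_segment (hG _)) _.
  change (dotv (Gh (a + t *: v)) v - (b * 1 + c / 2 * (2 * t ^+ 1 * 1)) =
          dotv (Gh (a + t *: v)) v - (b + c * t)).
  by congr (_ - (_ + _)); field.
have u_cont : {within `[0, 1], continuous u}.
  apply: continuous_subspaceT => t; have [du_ex _] := du t.
  by apply: differentiable_continuous; apply/derivable1_diffP.
have u01 : u 1 - u 0 = h (a + v) - (h a + b + c / 2).
  change (h (a + 1 *: v) - (b * 1 + c / 2 * (1 * 1))
          - (h (a + 0 *: v) - (b * 0 + c / 2 * (0 * 0))) =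
          h (a + v) - (h a + b + c / 2)).
  by rewrite scale1r scale0r addr0; ring.
have [t t01] := MVT ltr01 (fun t _ => du t) u_cont.
rewrite u01 subr0 mulr1 => /eqP; rewrite subr_eq => /eqP ->.
rewrite lerDr subr_ge0; apply: hb.
by move: t01; rewrite in_itv /= => /andP[/ltW -> /ltW ->].
Qed.

Lemma is_gradB h1 h2 x G1 G2 :
  is_grad h1 x G1 -> is_grad h2 x G2 -> is_grad (fun x => h1 x - h2 x) x (G1 - G2).
Proof.
move=> hG1 hG2 e e_gt0; have e2_gt0 : 0 < e / 2 by rewrite divr_gt0.
have [d1 d1_gt0 Hd1] := hG1 _ e2_gt0; have [d2 d2_gt0 Hd2] := hG2 _ e2_gt0.
exists (Num.min d1 d2) => [|d]; first by rewrite lt_min d1_gt0 d2_gt0.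
rewrite lt_min => /andP[/Hd1 le1 /Hd2 le2]; rewrite dotvBl.
have -> : h1 (x + d) - h2 (x + d) - (h1 x - h2 x) - (dotv G1 d - dotv G2 d)
  = (h1 (x + d) - h1 x - dotv G1 d) - (h2 (x + d) - h2 x - dotv G2 d) by ring.
apply: le_trans (ler_normB _ _) _; lra.
Qed.

End Gradient.

Section Smooth.
Variables (R : realType) (k : nat).
Implicit Types (h : 'rV[R]_k -> R) (Gh : 'rV[R]_k -> 'rV[R]_k) (a b x z : 'rV[R]_k).

Lemma lipschitz_grad_lb h Gh (L : R) a b :
  (forall x, is_grad h x (Gh x)) ->
  (forall x x', enorm (Gh x - Gh x') <= L * enorm (x - x')) ->
  h a + dotv (Gh a) (b - a) - L / 2 * enorm (b - a) ^+ 2 <= h b.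
Proof.
move=> hG hL; set v := b - a.
have -> : b = a + v by rewrite /v addrC subrK.
apply: (le_trans _
  (grad_segment_lb (b := dotv (Gh a) v) (c := - (L * enorm v ^+ 2)) hG _)).
  by rewrite lerD2l mulNr mulrAC.
move=> t /andP[t_ge0 _].
have := dotv_ge (Gh (a + t *: v) - Gh a) v; rewrite dotvBl.
have := hL (a + t *: v) a; rewrite (addrC a) addrK enormZ ger0_norm //.
have := enorm_ge0 v; rewrite expr2; nra.
Qed.

Lemma grad_diff_lb h1 h2 G1 G2 (M : R) a b :
  (forall x, is_grad h1 x (G1 x)) -> (forall x, is_grad h2 x (G2 x)) ->
  (forall x, enorm (G1 x - G2 x) <= M) ->
  h1 a - h2 a - M * enorm (b - a) <= h1 b - h2 b.
Proof.
move=> hG1 hG2 hM; set v := b - a.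
have -> : b = a + v by rewrite /v addrC subrK.
have := grad_segment_lb (a := a) (v := v) (b := - (M * enorm v)) (c := 0)
  (fun x => is_gradB (hG1 x) (hG2 x)).
rewrite mul0r addr0; apply=> t _; rewrite mul0r addr0.
have := dotv_ge (G1 (a + t *: v) - G2 (a + t *: v)) v.
have := ler_wpM2r (enorm_ge0 v) (hM (a + t *: v)); lra.
Qed.

(* [h + p/2 |. - z|^2] is [(p - L)]-strongly convex when [grad h] is [L]-Lipschitz. *)
Lemma prox_quadratic_growth (X : set 'rV[R]_k) h Gh (L p : R) z x0 x :
  convex_set X -> (forall x, is_grad h x (Gh x)) ->
  (forall x x', enorm (Gh x - Gh x') <= L * enorm (x - x')) ->
  X x0 -> (forall x, X x -> h x0 + p / 2 * enorm (x0 - z) ^+ 2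
                            <= h x + p / 2 * enorm (x - z) ^+ 2) -> X x ->
  h x0 + p / 2 * enorm (x0 - z) ^+ 2 + (p - L) / 2 * enorm (x - x0) ^+ 2
    <= h x + p / 2 * enorm (x - z) ^+ 2.
Proof.
move=> convX hG hL Xx0 x0_min Xx; set v := x - x0.
set K := fun x => h x + p / 2 * enorm (x - z) ^+ 2.
suff : K x0 + (p - L) / 2 * enorm v ^+ 2 - K x <= 0 by rewrite /K; lra.
apply: (@le0_of_forall_le_mul _ _ ((p - L) / 2 * enorm v ^+ 2)) => t t_gt0 t_lt1.
set xt := t *: x + (1 - t) *: x0.
have Xxt : X xt by apply: convX; rewrite ?(ltW t_gt0) ?(ltW t_lt1).
have := x0_min _ Xxt; have := lipschitz_grad_lb xt x hG hL.
have := lipschitz_grad_lb xt x0 hG hL.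
have -> : x - xt = (1 - t) *: v by apply/rowP => i; rewrite !mxE; ring.
have -> : x0 - xt = (- t) *: v by apply/rowP => i; rewrite !mxE; ring.
have -> : xt - z = t *: (x - z) + (1 - t) *: (x0 - z).
  by apply/rowP => i; rewrite !mxE; ring.
rewrite !dotvZr !enormZ normrN !ger0_norm ?subr_ge0 ?(ltW t_lt1) ?(ltW t_gt0) //.
rewrite enorm_convex_sqr opprB addrA subrK -/v /K.
set Gv := dotv _ v; set N := enorm v => lb0 lb1 min_t.
have t1_ge0 : 0 <= 1 - t by lra.
have := ler_wpM2l (ltW t_gt0) lb1; have := ler_wpM2l t1_ge0 lb0.
rewrite -(ler_pM2l t_gt0); nra.
Qed.

End Smooth.

Section Dual.
Variables (R : realType) (n m : nat) (X : set 'rV[R]_n) (Y : set 'rV[R]_m).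
Variables (f : 'rV[R]_n -> 'rV[R]_m -> R)
  (gx : 'rV[R]_n -> 'rV[R]_m -> 'rV[R]_n) (gy : 'rV[R]_n -> 'rV[R]_m -> 'rV[R]_m).
Variables (L p : R).
Hypothesis hXcv : convex_set X.
Hypothesis hgx : forall x y, is_grad (fun x' => f x' y) x (gx x y).
Hypothesis hgy : forall x y, is_grad (fun y' => f x y') y (gy x y).
Hypothesis hconc : forall x, concave_on setT (f x).
Hypothesis hLx1 : forall x x' y, enorm (gx x y - gx x' y) <= L * enorm (x - x').
Hypothesis hLx2 : forall x y y', enorm (gx x y - gx x y') <= L * enorm (y - y').
Hypothesis hLy1 : forall x x' y, enorm (gy x y - gy x' y) <= L * enorm (x - x').
Hypothesis hLy2 : forall x y y', enorm (gy x y - gy x y') <= L * enorm (y - y').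
Hypothesis hL0 : 0 <= L.
Hypothesis hpL : L < p.
Variable xf : 'rV[R]_m -> 'rV[R]_n -> 'rV[R]_n.
Hypothesis hxf : forall y z, X (xf y z) /\
  forall x, X x -> f (xf y z) y + p / 2 * enorm (xf y z - z) ^+ 2
                   <= f x y + p / 2 * enorm (x - z) ^+ 2.

Let mu := p - L.
Let K x z y := f x y + p / 2 * enorm (x - z) ^+ 2.
Let d y z := K (xf y z) z y.

Let mu_gt0 : 0 < mu. Proof. by rewrite subr_gt0. Qed.

Lemma prox_growth y z x : X x -> d y z + mu / 2 * enorm (x - xf y z) ^+ 2 <= K x z y.
Proof.
move=> Xx.
exact: (prox_quadratic_growth hXcv (hgx^~ y) (fun x x' => hLx1 x x' y)
  (hxf y z).1 (hxf y z).2 Xx).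
Qed.

Lemma prox_lipschitz y1 y2 z : mu * enorm (xf y1 z - xf y2 z) <= L * enorm (y1 - y2).
Proof.
set x1 := xf y1 z; set x2 := xf y2 z.
have := prox_growth y1 z (hxf y2 z).1; have := prox_growth y2 z (hxf y1 z).1.
have := grad_diff_lb x2 x1 (hgx^~ y1) (hgx^~ y2) (fun x => hLx2 x y1 y2).
rewrite /d /K -/x1 -/x2 (enormBC x2 x1).
set D := enorm (x1 - x2) => lip g2 g1.
have D_ge0 : 0 <= D := enorm_ge0 _.
have [->|D_neq0] := eqVneq D 0; first by rewrite mulr0 mulr_ge0 ?enorm_ge0.
have : D * (mu * D) <= D * (L * enorm (y1 - y2)) by nra.
by rewrite ler_pM2l // lt_def D_neq0.
Qed.

Let grad_d z y := gy (xf y z) y.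
Let Ld := L * p / mu.

Let Ld_ge0 : 0 <= Ld.
Proof. by rewrite divr_ge0 ?mulr_ge0 ?(ltW mu_gt0) // (le_trans hL0 (ltW hpL)). Qed.

Lemma grad_d_lipschitz_split z y1 y2 :
  enorm (grad_d z y1 - grad_d z y2)
    <= L * enorm (xf y1 z - xf y2 z) + L * enorm (y1 - y2).
Proof.
rewrite /grad_d -(subrK (gy (xf y2 z) y1) (gy (xf y1 z) y1)) -addrA.
by apply: le_trans (ler_enormD _ _) _; apply: lerD; [exact: hLy1 | exact: hLy2].
Qed.

Lemma grad_d_lipschitz z y1 y2 :
  enorm (grad_d z y1 - grad_d z y2) <= Ld * enorm (y1 - y2).
Proof.
rewrite /Ld mulrAC ler_pdivlMr // mulrC.
have := ler_wpM2l (ltW mu_gt0) (grad_d_lipschitz_split z y1 y2).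
have := ler_wpM2l hL0 (prox_lipschitz y1 y2 z).
rewrite /mu; nra.
Qed.

(* [d y' z <= K (xf y z) z y'], then concavity of [f (xf y z)]. *)
Lemma d_supergrad z y y' : d y' z <= d y z + dotv (grad_d z y) (y' - y).
Proof.
have := concave_grad_ge y' (hconc (xf y z)) (hgy (xf y z) y).
have := (hxf y' z).2 _ (hxf y z).1.
by rewrite /d /K /grad_d; lra.
Qed.

Lemma d_continuous z : continuous (d^~ z).
Proof.
move=> y0; apply/(@cvgrPdist_le _ _ _ (nbhs y0)) => e e_gt0.
set G0 := enorm (grad_d z y0).
have G0_ge0 : 0 <= G0 := enorm_ge0 _.
have C_gt0 : 0 < G0 + Ld + 1 by have := Ld_ge0; lra.
set del := Num.min 1 (e / (G0 + Ld + 1)).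
have del_le1 : del <= 1 by rewrite ge_min lexx.
have del_e : (G0 + Ld + 1) * del <= e.
  by rewrite mulrC -ler_pdivlMr // ge_min lexx orbT.
near=> y.
have : enorm (y - y0) < del.
  by near: y; apply: near_enorm_lt; rewrite lt_min ltr01 divr_gt0.
set D := enorm (y - y0) => D_lt.
have D_ge0 : 0 <= D := enorm_ge0 _.
have gy_le : enorm (grad_d z y) <= G0 + Ld * D.
  rewrite -(subrK (grad_d z y0) (grad_d z y)) addrC.
  by apply: le_trans (ler_enormD _ _) _; rewrite lerD2l grad_d_lipschitz.
have up := d_supergrad z y0 y; have lo := d_supergrad z y y0.
have := dotv_le (grad_d z y0) (y - y0); have := dotv_le (grad_d z y) (y0 - y).
rewrite (enormBC y0) -/D -/G0 => c1 c2.
have LdD_ge0 : 0 <= Ld * D := mulr_ge0 Ld_ge0 D_ge0.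
have gyD_le := ler_wpM2r D_ge0 gy_le.
have LdDD_le : Ld * D * D <= Ld * D by nra.
rewrite ler_norml; apply/andP; split; nra.
Unshelve. all: end_near.
Qed.

Hypothesis hY0 : Y !=set0.
Hypothesis hYcv : convex_set Y.
Hypothesis hYk : compact Y.

Lemma d_argmax_exists z : exists2 ys, Y ys & forall y, Y y -> d y z <= d ys z.
Proof.
have [ys Yys ys_max] := EVT_max_rV hY0 hYk (continuous_subspaceT (@d_continuous z)).
by exists ys => [|y Yy]; [rewrite inE in Yys | apply: ys_max; rewrite inE].
Qed.

Lemma d_argmax_grad_le0 z ys : Y ys -> (forall y, Y y -> d y z <= d ys z) ->
  forall w, Y w -> dotv (grad_d z ys) (w - ys) <= 0.
Proof.
move=> Yys ys_max w Yw; set v := w - ys; have N_ge0 := enorm_ge0 v.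
apply: (@le0_of_forall_le_mul _ _ (Ld * enorm v ^+ 2)) => t t_gt0 t_lt1.
set yt := t *: w + (1 - t) *: ys.
have Yyt : Y yt by apply: hYcv; rewrite ?(ltW t_gt0) ?(ltW t_lt1).
have ys_yt : ys - yt = (- t) *: v by apply/rowP => i; rewrite !mxE; ring.
have gyt_le0 : dotv (grad_d z yt) v <= 0.
  have := d_supergrad z yt ys; rewrite ys_yt dotvZr.
  by have := ys_max _ Yyt; rewrite -(pmulr_rle0 _ t_gt0); lra.
have := dotv_le (grad_d z ys - grad_d z yt) v; rewrite dotvBl.
have := grad_d_lipschitz z ys yt; rewrite ys_yt enormZ normrN (gtr0_norm t_gt0).
move=> /(ler_wpM2r N_ge0); nra.
Qed.

Lemma d_argmax_saddle z ys : Y ys -> (forall y, Y y -> d y z <= d ys z) ->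
  forall w, Y w -> f (xf ys z) w <= f (xf ys z) ys.
Proof.
move=> Yys ys_max w Yw.
have := concave_grad_ge w (hconc (xf ys z)) (hgy (xf ys z) ys).
by have := d_argmax_grad_le0 Yys ys_max Yw; rewrite /grad_d; lra.
Qed.

Variable xs : 'rV[R]_n -> 'rV[R]_n.
Hypothesis hxs : forall z, X (xs z) /\
  forall x, X x -> forall y, Y y -> exists2 y', Y y' &
    f (xs z) y + p / 2 * enorm (xs z - z) ^+ 2 <= f x y' + p / 2 * enorm (x - z) ^+ 2.

(* [(x(ys, z), ys)] is a saddle point of [K(., z; .)] on [X * Y], and
   [K(., z; ys)] has the unique minimiser [x(ys, z)]. *)
Lemma xs_eq_prox_argmax z ys : Y ys -> (forall y, Y y -> d y z <= d ys z) ->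
  xs z = xf ys z.
Proof.
move=> Yys ys_max.
have [y' Yy' xs_min] := (hxs z).2 _ (hxf ys z).1 _ Yys.
have := d_argmax_saddle Yys ys_max Yy'; have := prox_growth ys z (hxs z).1.
rewrite /d /K => growth saddle.
have sq_le0 : enorm (xs z - xf ys z) ^+ 2 <= 0.
  by rewrite -(pmulr_rle0 _ (_ : 0 < mu / 2)) ?divr_gt0 //; lra.
apply: subr0_eq; apply: enorm_eq0; apply/eqP.
by rewrite -sqrf_eq0 eq_le sq_le0 sqr_ge0.
Qed.

Lemma prox_gap_le_grad_d z ys yp : Y ys -> (forall y, Y y -> d y z <= d ys z) ->
  Y yp -> mu * enorm (xf ys z - xf yp z) ^+ 2 <= dotv (grad_d z yp) (ys - yp).
Proof.
move=> Yys ys_max Yyp.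
have := prox_growth yp z (hxf ys z).1; have := prox_growth ys z (hxf yp z).1.
have := concave_grad_ge yp (hconc (xf ys z)) (hgy (xf ys z) ys).
have := concave_grad_ge ys (hconc (xf yp z)) (hgy (xf yp z) yp).
have := d_argmax_grad_le0 Yys ys_max Yyp.
by rewrite /d /K /grad_d (enormBC (xf yp z)); lra.
Qed.

Variable PY : 'rV[R]_m -> 'rV[R]_m.
Hypothesis hPY : is_proj Y PY.
Variable alpha : R.
Hypothesis halpha : 0 < alpha.

Let sigma2 := 2 * (p + L) / (p - L).
Let y_plus z y := PY (y + alpha *: grad_d z y).

Lemma proj_ascent_grad_d_le z y w : Y w ->
  alpha * dotv (grad_d z (y_plus z y)) (w - y_plus z y)
    <= (1 + alpha * L + alpha * L * sigma2) * enorm (y - y_plus z y)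
       * enorm (w - y_plus z y).
Proof.
move=> Yw; set yp := y_plus z y; set e := enorm (y - yp); set W := enorm (w - yp).
have e_ge0 : 0 <= e := enorm_ge0 _; have W_ge0 : 0 <= W := enorm_ge0 _.
have step_le : alpha * dotv (grad_d z y) (w - yp) <= e * W.
  have := proj_dotv_le0 (y + alpha *: grad_d z y) hYcv hPY Yw.
  rewrite -/(y_plus z y) -/yp (_ : y + _ - yp = (y - yp) + alpha *: grad_d z y).
    by rewrite dotvDl dotvZl; have := dotv_ge (y - yp) (w - yp); rewrite -/e -/W; lra.
  by apply/rowP => i; rewrite !mxE; ring.
have xp_le : enorm (xf yp z - xf y z) <= sigma2 * e.
  have := prox_lipschitz yp y z; rewrite (enormBC yp) -/e /sigma2 -/mu.
  rewrite mulrAC ler_pdivlMr // mulrC => /le_trans -> //.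
  by rewrite ler_wpM2r //; have := hL0; have := hpL; lra.
have diff_le :
    dotv (grad_d z yp - grad_d z y) (w - yp) <= (L * (sigma2 * e) + L * e) * W.
  apply: le_trans (dotv_le _ _) _; rewrite ler_wpM2r //.
  apply: le_trans (grad_d_lipschitz_split z yp y) _.
  by rewrite (enormBC yp) lerD2r ler_wpM2l.
have := ler_wpM2l (ltW halpha) diff_le; rewrite dotvBl; lra.
Qed.

Lemma dist_argmax_bound z y ys : Y ys -> (forall y', Y y' -> d y' z <= d ys z) ->
  alpha * mu * enorm (xs z - xf (y_plus z y) z) ^+ 2
    <= (1 + alpha * L + alpha * L * sigma2) * enorm (y - y_plus z y)
       * enorm (y_plus z y - ys).
Proof.
move=> Yys ys_max; have Yyp : Y (y_plus z y) := (hPY _).1.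
rewrite (xs_eq_prox_argmax Yys ys_max) (enormBC _ ys) -mulrA.
apply: le_trans (proj_ascent_grad_d_le z y Yys).
by rewrite ler_wpM2l ?(ltW halpha) // prox_gap_le_grad_d.
Qed.

End Dual.

Unset Implicit Arguments. Set Strict Implicit.

Theorem lemma11 (R : realType) (n m : nat)
  (X : set 'rV[R]_n) (Y : set 'rV[R]_m)
  (f : 'rV[R]_n -> 'rV[R]_m -> R)
  (gx : 'rV[R]_n -> 'rV[R]_m -> 'rV[R]_n)
  (gy : 'rV[R]_n -> 'rV[R]_m -> 'rV[R]_m)
  (L p alpha : R)
  (* standing assumptions *)
  (hX0 : X !=set0) (hXc : closed X) (hXcv : convex_set X)
  (hY0 : Y !=set0) (hYc : closed Y) (hYcv : convex_set Y) (hYk : compact Y)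
  (hgx : forall x y, is_grad (fun x' => f x' y) x (gx x y))
  (hgy : forall x y, is_grad (fun y' => f x y') y (gy x y))
  (hgcont : forall x y (e : R), 0 < e -> exists2 del : R, 0 < del &
      forall x' y', enorm (x' - x) < del -> enorm (y' - y) < del ->
        enorm (gx x' y' - gx x y) < e /\ enorm (gy x' y' - gy x y) < e)
  (hconc : forall x, concave_on setT (f x))
  (hLx1 : forall x x' y, enorm (gx x y - gx x' y) <= L * enorm (x - x'))
  (hLx2 : forall x y y', enorm (gx x y - gx x y') <= L * enorm (y - y'))
  (hLy1 : forall x x' y, enorm (gy x y - gy x' y) <= L * enorm (x - x'))
  (hLy2 : forall x y y', enorm (gy x y - gy x y') <= L * enorm (y - y'))
  (hlb : exists c : R, forall x, X x -> exists2 y, Y y & c <= f x y)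
  (* parameters *)
  (hpL : L < p) (halpha : 0 < alpha)
  (* the objects of the context *)
  (PY : 'rV[R]_m -> 'rV[R]_m) (hPY : is_proj Y PY)
  (xf : 'rV[R]_m -> 'rV[R]_n -> 'rV[R]_n)   (* x(y,z) *)
  (hxf : forall y z, X (xf y z) /\
     forall x, X x -> f (xf y z) y + p / 2 * enorm (xf y z - z) ^+ 2
                      <= f x y + p / 2 * enorm (x - z) ^+ 2)
  (xs : 'rV[R]_n -> 'rV[R]_n)               (* x^*(z) *)
  (hxs : forall z, X (xs z) /\
     forall x, X x -> forall y, Y y -> exists2 y', Y y' &
       f (xs z) y + p / 2 * enorm (xs z - z) ^+ 2
         <= f x y' + p / 2 * enorm (x - z) ^+ 2) :
  let K (x z : 'rV[R]_n) (y : 'rV[R]_m) := f x y + p / 2 * enorm (x - z) ^+ 2 in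
  let d y z := K (xf y z) z y in
  let Yz z := [set y | Y y /\ forall y', Y y' -> d y' z <= d y z] in
  let sigma2 := 2 * (p + L) / (p - L) in
  forall y z, Y y ->
  let yp := PY (y + alpha *: gy (xf y z) y) in
  alpha * (p - L) * enorm (xs z - xf yp z) ^+ 2
    <= (1 + alpha * L + alpha * L * sigma2) * enorm (y - yp) * set_dist yp (Yz z)
  /\ (1 + alpha * L + alpha * L * sigma2) * enorm (y - yp) * set_dist yp (Yz z)
    <= (1 + alpha * L + alpha * L * sigma2) * enorm (y - yp) * set_diam Y.
Proof.
move=> K d Yz sigma2 y z Yy yp.
have [L_lt0|L_ge0] := ltP L 0.
  rewrite (neg_lipschitz_eq L_lt0 (fun a b => hLx1 a b 0) (xs z) (xf yp z)).
  rewrite (neg_lipschitz_eq L_lt0 (hLx2 0) y yp) !subrr !enorm0.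
  by rewrite expr0n /= !(mulr0, mul0r).
have [ys Yys ys_max] : exists2 ys, Y ys & forall y', Y y' -> d y' z <= d ys z.
  exact (d_argmax_exists hXcv hgx hgy hconc hLx1 hLx2 hLy1 hLy2 L_ge0 hpL hxf
    hY0 hYk z).
have C_ge0 : 0 <= (1 + alpha * L + alpha * L * sigma2) * enorm (y - yp).
  have sigma2_ge0 : 0 <= sigma2 by rewrite /sigma2 divr_ge0 //; lra.
  have aL_ge0 : 0 <= alpha * L by rewrite mulr_ge0 // ltW.
  by rewrite mulr_ge0 ?enorm_ge0 // !addr_ge0 // mulr_ge0.
split.
  apply: ler_set_dist => // [|w [Yw w_max]]; first by exists ys.
  exact (dist_argmax_bound hXcv hgx hgy hconc hLx1 hLx2 hLy1 hLy2 L_ge0 hpL hxf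
    hYcv hxs hPY halpha y Yw w_max).
rewrite ler_wpM2l //; apply: le_trans (set_dist_le yp (conj Yys ys_max : Yz z ys)) _.
exact: set_diam_ge hYk (hPY _).1 Yys.
Qed.
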